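(* Let $n \ge 1$ be an integer and let $t \in \overline{D}(1+2^{2n-1}, 2^{-2n})$. Let $z \in \mathbb{C}_2$ satisfy $|z + \tfrac12| = 2^k$, where $k$ is a real number with $-2n < k < 1$. Then $|f_t(z) + \tfrac12| = 2^{k+2}$.
   Context: Let $|\cdot|$ denote the $2$-adic absolute value on $\mathbb{C}_2$, normalized by $|2| = 1/2$. The notation $\overline{D}(a,\delta)$ denotes the closed disk $\{z \in \mathbb{C}_2 : |z-a| \le \delta\}$. For $t \in \mathbb{C}_2$, let $f_t(z) = -\tfrac32 t(-2z^3+3z^2)+1$. *)

From HB Require Import structures.
From mathcomp Require Import all_boot all_order all_algebra.
From mathcomp Require Import reals exp.
Set Implicit Arguments. Unset Strict Implicit. Unset Printing Implicit Defensive.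
Import Order.TTheory GRing.Theory Num.Theory.
Local Open Scope ring_scope.

Definition nonarch_abs (K : fieldType) (R : realType) (a : K -> R) : Prop :=
  [/\ (forall x, 0 <= a x),
      (forall x, a x = 0 <-> x = 0),
      (forall x y, a (x * y) = a x * a y)
    & (forall x y, a (x + y) <= Num.max (a x) (a y))].

Definition abs_complete (K : fieldType) (R : realType) (a : K -> R) : Prop :=
  forall u : nat -> K,
    (forall e : R, 0 < e -> exists N : nat, forall m n : nat,
        (N <= m)%N -> (N <= n)%N -> a (u m - u n) < e) ->
    exists l : K, forall e : R, 0 < e -> exists N : nat, forall n : nat,
        (N <= n)%N -> a (u n - l) < e.

Definition cdisk (K : fieldType) (R : realType) (a : K -> R) (c : K) (d : R) : K -> Prop :=
  fun z => a (z - c) <= d.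

Definition f_t (K : fieldType) (t z : K) : K :=
  - (3%:R / 2%:R) * t * (- 2%:R * z ^+ 3 + 3%:R * z ^+ 2) + 1.

(** With [w = z + 1/2] one has
    [f_t(z) + 1/2 = 3/2 (1 - t) - 9 t w^2 + 3 t w^3 + 27/4 t w].
    Since [|1 - t| = 2^(1-2n)] and [|t| = 1], the four terms have sizes
    [2^(2-2n)], [|w|^2], [|w|^3] and [4 |w|]; the hypothesis [2^(-2n) < |w| < 2]
    makes the last one strictly dominant, so by the ultrametric inequality
    [|f_t(z) + 1/2| = 4 |w| = 2^(k+2)]. *)
From HB Require Import structures.
From mathcomp Require Import all_boot all_order all_algebra.
From mathcomp Require Import reals exp.
From mathcomp Require Import ring lra zify.
Set Implicit Arguments. Unset Strict Implicit. Unset Printing Implicit Defensive.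
Import Order.TTheory GRing.Theory Num.Theory.
Local Open Scope ring_scope.

Lemma gt1_ltr_powR (R : realType) (b : R) : 1 < b -> {homo powR b : x y / x < y}.
Proof.
move=> b1 x y xy; have b0 : b != 0 by rewrite gt_eqF // (lt_trans ltr01).
by rewrite /powR (negbTE b0) ltr_expR ltr_pM2r // ln_gt0.
Qed.

Lemma f_t_shift (K : fieldType) (t z : K) : (2%:R : K) != 0 ->
  f_t t z + 2%:R^-1 =
    3%:R / 2%:R * (1 - t) - 3%:R ^+ 2 * t * (z + 2%:R^-1) ^+ 2
    + 3%:R * t * (z + 2%:R^-1) ^+ 3 + 3%:R ^+ 3 * 2%:R^-1 ^+ 2 * t * (z + 2%:R^-1).
Proof. by move=> nz2; rewrite /f_t; field. Qed.

Section UltrametricAbs.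
Variables (R : realType) (K : fieldType) (a : K -> R).
Hypothesis Ha : nonarch_abs a.

Lemma abs_ge0 x : 0 <= a x.
Proof. by case: Ha. Qed.

Lemma abs_eq0 x : (a x == 0) = (x == 0).
Proof. by case: Ha => _ h0 _ _; apply/eqP/eqP => /h0. Qed.

Lemma abs0 : a 0 = 0.
Proof. by apply/eqP; rewrite abs_eq0. Qed.

Lemma absM x y : a (x * y) = a x * a y.
Proof. by case: Ha. Qed.

Lemma abs1 : a 1 = 1.
Proof.
have nz : a 1 != 0 by rewrite abs_eq0 oner_eq0.
by apply: (mulfI nz); rewrite -absM !mulr1.
Qed.

Lemma absN x : a (- x) = a x.
Proof.
have aN1 : a (-1) = 1.
  have : a (-1) * a (-1) = 1 by rewrite -absM mulrNN mulr1 abs1.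
  have := abs_ge0 (-1); nra.
by rewrite -mulN1r absM aN1 mul1r.
Qed.

Lemma absX x m : a (x ^+ m) = a x ^+ m.
Proof. by elim: m => [|m IH]; rewrite ?abs1 // !exprS absM IH. Qed.

Lemma absV x : a x^-1 = (a x)^-1.
Proof.
have [->|nz] := eqVneq x 0; first by rewrite invr0 abs0 invr0.
have ax : a x != 0 by rewrite abs_eq0.
by apply: (mulfI ax); rewrite -absM !mulfV ?abs1.
Qed.

Lemma absD_lt x y c : a x < c -> a y < c -> a (x + y) < c.
Proof.
move=> hx hy; case: Ha => _ _ _ hD.
by apply: le_lt_trans (hD x y) _; rewrite gt_max hx hy.
Qed.

Lemma absD_eqr x y : a x < a y -> a (x + y) = a y.
Proof.
case: Ha => _ _ _ hD lt; apply/eqP; rewrite eq_le; apply/andP; split.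
  by have := hD x y; rewrite max_r // ltW.
(* [y = (x + y) + (- x)], and [- x] is too small to account for [a y]. *)
have := hD (x + y) (- x); rewrite [x + y - x]addrC addKr absN.
by rewrite le_max [a y <= a x]leNgt lt orbF.
Qed.

Lemma abs_eq_of_absB_lt x y : a (x - y) < a y -> a x = a y.
Proof. by move=> /absD_eqr; rewrite subrK. Qed.

Section Dyadic.
Hypothesis a2 : a 2%:R = 2%:R^-1.

Lemma two_neq0 : (2%:R : K) != 0.
Proof. by rewrite -abs_eq0 a2 invr_eq0 pnatr_eq0. Qed.

Lemma abs3 : a 3%:R = 1.
Proof. by rewrite -addn1 natrD absD_eqr abs1 // a2 invf_lt1 ?ltr1n. Qed.

Lemma abs2X m : a (2%:R ^+ m) = 2%:R ^- m.
Proof. by rewrite absX a2 exprVn. Qed.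

Lemma abs_subr1_cdisk m t :
  cdisk a (1 + 2%:R ^+ m) (2%:R ^- m.+1) t -> a (t - 1) = 2%:R ^- m.
Proof.
rewrite /cdisk => ht.
rewrite -(abs2X m) -[t - 1](subrK (2%:R ^+ m)) absD_eqr // -addrA -opprD abs2X.
apply: le_lt_trans ht _.
rewrite exprS invfM gtr_pMl ?invr_gt0 ?exprn_gt0 // invf_lt1 ?ltr1n //.
Qed.

End Dyadic.
End UltrametricAbs.

Theorem lemma1 (R : realType) (K : closedFieldType) (a : K -> R)
  (Ha : nonarch_abs a) (Hcomplete : abs_complete a) (H2 : a 2%:R = 2%:R^-1)
  (n : nat) (hn : (1 <= n)%N) (t : K)
  (ht : cdisk a (1 + 2%:R ^+ (2 * n).-1) (2%:R ^- (2 * n)) t)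
  (z : K) (k : R) (hk1 : - ((2 * n)%:R) < k) (hk2 : k < 1)
  (hz : a (z + 2%:R^-1) = 2%:R `^ k) :
  a (f_t t z + 2%:R^-1) = 2%:R `^ (k + 2%:R).
Proof.
set m := (2 * n).-1 in ht; have em : (2 * n = m.+1)%N by rewrite /m; lia.
rewrite em in ht hk1.
have at1 : a (t - 1) = 2%:R ^- m := abs_subr1_cdisk Ha H2 ht.
have at_ : a t = 1.
  rewrite -(abs1 Ha); apply: (abs_eq_of_absB_lt Ha).
  rewrite (abs1 Ha) at1 invf_lt1 ?exprn_gt0 //.
  by rewrite exprn_egt1 ?ltr1n // /m; lia.
set w := z + 2%:R^-1 in hz *; set p := 2%:R `^ k in hz *.
have p_gt0 : 0 < p by rewrite powR_gt0.
have p_lt2 : p < 2%:R by rewrite -[X in _ < X]powRr1 // gt1_ltr_powR ?ltr1n.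
have p_gt : 2%:R ^- m < 2%:R * p.
  move: (gt1_ltr_powR (ltr1n R 2) hk1); rewrite powR_invn // exprS invfM -/p.
  have : 0 < (2%:R : R) ^- m by rewrite invr_gt0 exprn_gt0.
  lra.
have aM := absM Ha; have a3 := abs3 Ha H2.
have a2V : a 2%:R^-1 = 2%:R by rewrite (absV Ha) H2 invrK.
have dominant : a (3%:R ^+ 3 * 2%:R^-1 ^+ 2 * t * w) = 4%:R * p.
  by rewrite !aM a3 a2V at_ hz; ring.
rewrite f_t_shift ?(two_neq0 Ha H2) // -/w (absD_eqr Ha) dominant.
  by rewrite powRD ?pnatr_eq0 ?implybT // powR_mulrn // -/p; ring.
apply: (absD_lt Ha); first apply: (absD_lt Ha).
- by rewrite !aM a3 a2V -(absN Ha) opprB at1 mul1r; lra.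
- by rewrite (absN Ha) !aM a3 at_ hz; nra.
- by rewrite !aM a3 at_ hz; nra.
Qed.
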